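(* For every finite graph $G$ on $n \ge 1$ vertices, we have \[f(G) \ge \frac{1}{250}\left(\frac{n}{\hom(G)}\right)^{1/2}.\]
   Context: All graphs are finite and simple. A subset of the vertices of a graph is homogeneous if it induces either a clique or an independent set; $\hom(G)$ denotes the size of the largest homogeneous set of $G$. For a graph $G$, $f(G)$ denotes the largest integer $k$ for which $G$ contains an induced subgraph in which exactly $k$ distinct values occur among the vertex degrees (i.e., an induced subgraph with $k$ distinct degrees). *)

From mathcomp Require Import all_boot.
From Stdlib Require Import Reals.
Set Implicit Arguments. Unset Strict Implicit. Unset Printing Implicit Defensive.

Definition simple_graph (T : finType) (e : rel T) : Prop :=
  symmetric e /\ irreflexive e.

Definition ideg (T : finType) (e : rel T) (S : {set T}) (v : T) : nat :=
  #|[set u in S | e v u]|.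

Definition num_distinct_degrees (T : finType) (e : rel T) (S : {set T}) : nat :=
  size (undup [seq ideg e S v | v in S]).

Definition fdeg (T : finType) (e : rel T) : nat :=
  \max_(S : {set T}) num_distinct_degrees e S.

Definition clique (T : finType) (e : rel T) (S : {set T}) : bool :=
  [forall x in S, forall y in S, (x != y) ==> e x y].
Definition indep (T : finType) (e : rel T) (S : {set T}) : bool :=
  [forall x in S, forall y in S, ~~ e x y].
Definition homogeneous (T : finType) (e : rel T) (S : {set T}) : bool :=
  clique e S || indep e S.

Definition homn (T : finType) (e : rel T) : nat :=
  \max_(S : {set T} | homogeneous e S) #|S|.

(* Let n = |T| and average over all 2^n vertex sets S.  Cauchy-Schwarz over
   the degree classes of G[S] gives |S|^2 <= f(G) #{(u,v) in S^2 : d_S(u) = d_S(v)},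
   and the left-hand side sums to n(n+1)2^n/4.  For u <> v, d_S(u) = d_S(v) says
   that S meets A(u,v) = N(u) \ N[v] and A(v,u) equally often; fixing S off the
   larger of the two sets, of size a, at most C(a, a/2) <= 2^a / sqrt(a+1) choices
   remain, so only a fraction 1/sqrt(a+1) of the sets containing u and v qualify.
   At most (2s+3) hom(G) vertices v have a <= s: among them each non-neighbour of u
   has at most s+1 neighbours and each neighbour of u at most s non-neighbours, so
   a greedy choice yields a homogeneous set of proportional size.  Summing
   1/sqrt(a+1) over v is therefore O(sqrt(n hom(G))), and comparing both sides
   gives f(G) >= sqrt(n / hom(G)) / 6. *)

From Stdlib Require Import Reals Lra Psatz.
From mathcomp Require Import all_boot zify.

Set Implicit Arguments. Unset Strict Implicit. Unset Printing Implicit Defensive.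

(** * Central binomial coefficients *)

Lemma leq_bin_half n k : 'C(n, k) <= 'C(n, n./2).
Proof.
have n_halves := odd_double_half n.
have bin_up j : j.*2.+2 <= n -> 'C(n, j) <= 'C(n, j.+1).
  by move=> lt_jn; rewrite -(leq_pmul2l (ltn0Sn j)) mul_bin_left leq_mul2r; lia.
have up_to_half j : j <= n./2 -> 'C(n, j) <= 'C(n, n./2).
  move=> le_jh; rewrite -(subnK le_jh); have : n./2 - j + j <= n./2 by lia.
  elim: (n./2 - j) => // d IHd le_dh.
  by apply: leq_trans (IHd _) _; [lia | apply: bin_up; lia].
have [lt_nk|le_kn] := ltnP n k; first by rewrite bin_small.
have [le_kh|lt_hk] := leqP k n./2; first exact: up_to_half.
by rewrite -bin_sub //; apply: up_to_half; lia.
Qed.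

Lemma mul_bin_central_odd k : k.+1 * 'C(k.*2.+1, k) = k.*2.+1 * 'C(k.*2, k).
Proof.
have -> : 'C(k.*2.+1, k) = 'C(k.*2.+1, k.+1).
  by rewrite -bin_sub; [congr 'C(_, _); lia | lia].
by rewrite -mul_bin_diag.
Qed.

Lemma mul_bin_central_even k : k.+1 * 'C(k.+1.*2, k.+1) = 2 * (k.*2.+1 * 'C(k.*2, k)).
Proof. by rewrite -mul_bin_central_odd mulnCA -mul_bin_diag doubleS /=; lia. Qed.

Lemma central_bin_sqr_bound k : 'C(k.*2, k) ^ 2 * k.*2.+1 <= 16 ^ k.
Proof.
elim: k => [|k IHk]; first by rewrite bin0.
have step := mul_bin_central_even k.
set c := 'C(k.*2, k) in IHk step; set c' := 'C(k.+1.*2, k.+1) in step *.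
rewrite -(leq_pmul2l (expn_gt0 k.+1 2)) mulnA -expnMn step [16 ^ _]expnS [X in _ <= X]mulnA.
have ratio : 4 * (k.*2.+1 * k.+1.*2.+1) <= k.+1 ^ 2 * 16 by rewrite !doubleS -!mul2n; nia.
apply: leq_trans _ (leq_mul ratio IHk); rewrite doubleS -!mul2n; nia.
Qed.

Lemma bin_half_sqr_bound a : 'C(a, a./2) ^ 2 * a.+1 <= 4 ^ a.
Proof.
have [k ->] : exists k, a = k.*2 + odd a by exists a./2; rewrite addnC odd_double_half.
have central := central_bin_sqr_bound k.
have exp4 : 4 ^ k.*2 = 16 ^ k by rewrite -mul2n expnM.
case: (odd a); rewrite /= ?addn1 ?addn0; last by rewrite doubleK exp4.
rewrite (uphalf_double k : k.*2.+1./2 = k) [4 ^ _]expnS exp4.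
rewrite -(leq_pmul2l (expn_gt0 k.+1 2)) mulnA -expnMn mul_bin_central_odd [X in _ <= X]mulnA.
have ratio : k.*2.+1 * k.*2.+2 <= k.+1 ^ 2 * 4 by rewrite -!mul2n; nia.
apply: leq_trans _ (leq_mul ratio central); rewrite -!mul2n; nia.
Qed.

Lemma leq_sqr_sum I (s : seq I) (F : I -> nat) :
  (\sum_(i <- s) F i) ^ 2 <= size s * \sum_(i <- s) F i ^ 2.
Proof.
have sum_const c : \sum_(j <- s) c = size s * c.
  by rewrite big_const_seq count_predT iter_addn_0 mulnC.
rewrite -(leq_pmul2l (ltn0Sn 1)) -mulnn big_distrlr big_distrr /=.
apply: (@leq_trans (\sum_(i <- s) \sum_(j <- s) (F i ^ 2 + F j ^ 2))).
  by apply: leq_sum => i _; rewrite big_distrr; apply: leq_sum => j _; apply: nat_Cauchy.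
under eq_bigr => i _ do rewrite big_split /= sum_const.
by rewrite big_split /= sum_const -big_distrr /= addnn mul2n.
Qed.

Definition collisions (T : finType) (V : eqType) (f : T -> V) (S : {set T}) : nat :=
  \sum_(u in S) \sum_(v in S | f u == f v) 1.

Lemma sum_by_values (T : finType) (V : eqType) (f : T -> V) (S : {set T}) (g : T -> nat) :
  \sum_(u in S) g u = \sum_(d <- undup [seq f v | v in S]) \sum_(u in S | f u == d) g u.
Proof.
under [RHS]eq_bigr => d _ do rewrite big_mkcondr.
rewrite exchange_big /=; apply: eq_bigr => u uS.
rewrite -big_mkcond /= big_const_seq.
have -> : count (fun d => f u == d) (undup [seq f v | v in S]) = 1.
  rewrite (eq_count (a2 := pred1 (f u))) => [|d]; last by rewrite /= eq_sym.
  by rewrite count_uniq_mem ?undup_uniq // mem_undup (image_f f uS).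
by rewrite /= addn0.
Qed.

Lemma sqr_card_leq_values_collisions (T : finType) (V : eqType) (f : T -> V) (S : {set T}) :
  #|S| ^ 2 <= size (undup [seq f v | v in S]) * collisions f S.
Proof.
set D := undup _; pose fibre d := \sum_(u in S | f u == d) 1.
have -> : #|S| = \sum_(d <- D) fibre d by rewrite -sum1_card (sum_by_values f).
suff -> : collisions f S = \sum_(d <- D) fibre d ^ 2 by apply: leq_sqr_sum.
rewrite /collisions (sum_by_values f); apply: eq_bigr => d _.
rewrite -mulnn big_distrl /=; apply: eq_bigr => u /andP[_ /eqP fu_d].
by rewrite mul1n; apply: eq_bigl => v; rewrite fu_d eq_sym.
Qed.

(** * Counting subsets *)

Section SubsetCounting.
Variable T : finType.
Implicit Types A B S Y : {set T}.

Lemma card_setD_fibre A Y :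
  [disjoint Y & A] -> #|[set S | S :\: A == Y]| = 2 ^ #|A|.
Proof.
move=> dYA; rewrite -card_powerset.
have trace_inj : {in [set S | S :\: A == Y] &, injective (fun S => S :&: A)}.
  move=> S1 S2; rewrite !inE => /eqP S1Y /eqP S2Y eqI.
  by rewrite -(setID S1 A) -(setID S2 A) eqI S1Y S2Y.
rewrite -(card_in_imset trace_inj); apply: eq_card => B; rewrite powersetE.
apply/imsetP/idP => [[S _ ->]|sBA]; first exact: subsetIr.
have /eqP BA0 : B :\: A == set0 by rewrite setD_eq0.
have /eqP YA0 : Y :&: A == set0 by rewrite setI_eq0.
exists (Y :|: B); first by rewrite inE setDUl (setDidPl dYA) BA0 setU0.
by rewrite setIUl YA0 set0U (setIidPl sBA).
Qed.

Lemma card_supsets A : 2 ^ #|A| * #|[set S : {set T} | A \subset S]| = 2 ^ #|T|.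
Proof.
have dAC : [disjoint A & ~: A] by rewrite disjoints_subset setCK.
rewrite -(cardsC A) expnD -(card_setD_fibre dAC); congr (_ * _); apply: eq_card => S.
by rewrite !inE setDE setCK eqEsubset subsetIr subsetI subxx andbT.
Qed.

Lemma card_setD_fibre_trace A Y k :
  #|[set S | (S :\: A == Y) && (#|S :&: A| == k)]| <= 'C(#|A|, k).
Proof.
have trace_inj : {in [set S | (S :\: A == Y) && (#|S :&: A| == k)] &,
                  injective (fun S => S :&: A)}.
  move=> S1 S2; rewrite !inE => /andP[/eqP S1Y _] /andP[/eqP S2Y _] eqI.
  by rewrite -(setID S1 A) -(setID S2 A) eqI S1Y S2Y.
rewrite -cards_draws -(card_in_imset trace_inj); apply/subset_leq_card/subsetP => B.
by case/imsetP => S; rewrite !inE => /andP[_ k_SA] ->; rewrite subsetIr.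
Qed.

(* In each fibre of S |-> S :\: A, of size 2^|A|, the condition fixes #|S :&: A|. *)
Lemma card_trace_eq_leq A (P : pred {set T}) (k : {set T} -> nat) :
    (forall S, P (S :\: A) = P S) -> (forall S, k (S :\: A) = k S) ->
  #|[set S | P S && (#|S :&: A| == k S)]| * 2 ^ #|A| <=
    'C(#|A|, #|A|./2) * #|[set S | P S]|.
Proof.
move=> PD kD; rewrite -!sum1dep_card.
rewrite (partition_big (fun S => S :\: A) xpredT) //.
rewrite [X in _ <= _ * X](partition_big (fun S => S :\: A) xpredT) //.
rewrite big_distrl big_distrr; apply: leq_sum => Y _ /=.
have [/andP[PY dYA] | bad_Y] := boolP (P Y && [disjoint Y & A]).
  apply: leq_mul; rewrite sum1dep_card.
    apply: leq_trans (leq_trans (card_setD_fibre_trace A Y (k Y)) (leq_bin_half _ _)).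
    apply/subset_leq_card/subsetP => S; rewrite !inE => /andP[/andP[_ k_SA] /eqP SY].
    by rewrite -SY kD eqxx k_SA.
  rewrite -(card_setD_fibre dYA); apply/subset_leq_card/subsetP => S.
  by rewrite !inE => /eqP SY; rewrite -PD SY PY eqxx.
rewrite big_pred0 // => S; apply/negP => /andP[/andP[PS _] /eqP SY].
by move/negP: bad_Y; apply; rewrite -SY PD PS disjoints_subset subsetDr.
Qed.

End SubsetCounting.

Lemma sum_bool_card (I : finType) (P b : pred I) :
  \sum_(i | P i) (b i : nat) = #|[set i | P i && b i]|.
Proof. by rewrite -sum1dep_card big_mkcondr. Qed.

Definition pair_sets (T : finType) (u v : T) : {set {set T}} :=
  [set S : {set T} | (u \in S) && (v \in S)].

Lemma card_pair_sets (T : finType) (u v : T) :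
  2 ^ #|[set u; v]| * #|pair_sets u v| = 2 ^ #|T|.
Proof.
rewrite -(card_supsets [set u; v]); congr (_ * _); apply: eq_card => S.
by rewrite !inE subUset !sub1set.
Qed.

Lemma card_pair_sets_diag (T : finType) (u : T) : 2 * #|pair_sets u u| = 2 ^ #|T|.
Proof. by rewrite -(card_pair_sets u u) setUid cards1. Qed.

Lemma card_pair_sets_off (T : finType) (u v : T) : u != v -> 4 * #|pair_sets u v| = 2 ^ #|T|.
Proof. by move=> uv; rewrite -(card_pair_sets u v) cards2 uv. Qed.

Lemma sum_subsets_pairs (T : finType) (F : {set T} -> T -> T -> bool) :
  \sum_(S : {set T}) \sum_(u in S) \sum_(v in S | F S u v) 1 =
    \sum_(u : T) \sum_(v : T) #|[set S : {set T} | [&& u \in S, v \in S & F S u v]]|.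
Proof.
transitivity (\sum_(S : {set T}) \sum_(u : T) \sum_(v : T) ([&& u \in S, v \in S & F S u v] : nat)).
  apply: eq_bigr => S _; rewrite big_mkcond; apply: eq_bigr => u _.
  by case: (u \in S); rewrite ?big_mkcond // big1.
rewrite exchange_big; apply: eq_bigr => u _; rewrite exchange_big; apply: eq_bigr => v _.
by rewrite sum_bool_card.
Qed.

Lemma sum_sqr_card (T : finType) :
  \sum_(S : {set T}) #|S| ^ 2 = \sum_(u : T) \sum_(v : T) #|pair_sets u v|.
Proof.
transitivity (\sum_(S : {set T}) \sum_(u in S) \sum_(v in S | true) 1).
  apply: eq_bigr => S _; rewrite -mulnn -sum_nat_const; apply: eq_bigr => u _.
  by rewrite -sum1_card; apply: eq_bigl => v; rewrite andbT.
rewrite sum_subsets_pairs; apply: eq_bigr => u _; apply: eq_bigr => v _.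
by apply: eq_card => S; rewrite !inE andbT.
Qed.

Definition stable (T : finType) (r : rel T) (Y : {set T}) : Prop :=
  {in Y &, forall x y, x != y -> ~~ r x y}.

Lemma greedy_stable_set (T : finType) (r : rel T) (D : nat) (X : {set T}) :
    symmetric r -> {in X, forall x, #|[set y in X | r x y && (y != x)]| <= D} ->
  exists Y : {set T}, [/\ Y \subset X, stable r Y & #|X| <= #|Y| * D.+1].
Proof.
move=> r_sym; elim: {X}_.+1 {-2}X (ltnSn #|X|) => // m IHm X ltXm degX.
have [->|[x xX]] := set_0Vmem X.
  by exists set0; rewrite sub0set cards0; split=> // ? ?; rewrite inE.
set Nx := x |: [set y in X | r x y && (y != x)]; set Z := X :\: Nx.
have xNx : x \in Nx by rewrite !inE eqxx.
have ZX : Z \subset X := subsetDl X Nx.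
have cardX : #|X| <= #|Z| + D.+1.
  rewrite -(cardsID Nx X) addnC leq_add // (leq_trans (subset_leq_card (subsetIr X Nx))) //.
  by rewrite cardsU1; exact: leq_add (leq_b1 _) (degX x xX).
have ltZm : #|Z| < m.
  suff : #|Z| < #|X| by lia.
  by rewrite proper_card // properE ZX; apply/subsetPn; exists x; rewrite // inE xNx.
have degZ : {in Z, forall z, #|[set y in Z | r z y && (y != z)]| <= D}.
  move=> z zZ; apply: leq_trans (degX z (subsetP ZX z zZ)).
  apply/subset_leq_card/subsetP => y; rewrite !in_set => /andP[yZ ->].
  by case/andP: yZ => _ ->.
have [Y [YZ stY cardZ]] := IHm Z ltZm degZ.
have notNx y : y \in Y -> (y != x) && ~~ r x y.
  move/(subsetP YZ); rewrite !inE negb_or => /andP[/andP[yx Nxy] yX].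
  by move: Nxy; rewrite yx yX !andbT.
exists (x |: Y); split.
- by rewrite subUset sub1set xX (subset_trans YZ ZX).
- move=> a b; rewrite !inE => /orP[/eqP->|aY] /orP[/eqP->|bY]; rewrite ?eqxx //.
  + by case/andP: (notNx b bY).
  + by case/andP: (notNx a aY); rewrite r_sym.
  + exact: stY.
- have /negbTE xY : x \notin Y by apply/negP => /notNx; rewrite eqxx.
  by rewrite cardsU1 xY add1n mulSn; lia.
Qed.

(** * Equal degrees in induced subgraphs *)

Section SimpleGraph.
Variables (T : finType) (e : rel T).
Hypotheses (e_sym : symmetric e) (e_irr : irreflexive e).
Implicit Types (S : {set T}) (u v x y : T).

Definition nbhd_diff (u v : T) : {set T} := [set w | e u w && ~~ e v w && (w != v)].

Definition nbhd_gap (u v : T) : nat := maxn #|nbhd_diff u v| #|nbhd_diff v u|.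

Lemma homogeneous_leq_homn (S : {set T}) : homogeneous e S -> #|S| <= homn e.
Proof. exact: (@leq_bigmax_cond _ (homogeneous e) (fun S => #|S|)). Qed.

Lemma stable_leq_homn (Y : {set T}) : stable e Y -> #|Y| <= homn e.
Proof.
move=> stY; apply/homogeneous_leq_homn/orP; right.
apply/forall_inP => x xY; apply/forall_inP => y yY.
by have [->|/(stY x y xY yY)] := eqVneq x y; rewrite ?e_irr.
Qed.

Lemma costable_leq_homn (Y : {set T}) : stable [rel x y | ~~ e x y] Y -> #|Y| <= homn e.
Proof.
move=> stY; apply/homogeneous_leq_homn/orP; left.
apply/forall_inP => x xY; apply/forall_inP => y yY; apply/implyP => xy.
by rewrite -[e x y]negbK (stY x y xY yY xy).
Qed.

Lemma homn_gt0 : 0 < #|T| -> 0 < homn e.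
Proof.
case/card_gt0P => x _; apply: leq_trans (stable_leq_homn (Y := [set x]) _).
  by rewrite cards1.
by move=> a b /set1P-> /set1P->; rewrite eqxx.
Qed.

Lemma card_small_gap_nonadj u s :
  #|[set v | ~~ e u v & nbhd_gap u v <= s]| <= homn e * s.+2.
Proof.
set X := [set v | _ & _].
have degX : {in X, forall w, #|[set y in X | e w y && (y != w)]| <= s.+1}.
  move=> w; rewrite inE => /andP[_ gap_w].
  apply: (@leq_trans #|u |: nbhd_diff w u|).
    apply/subset_leq_card/subsetP => y; rewrite !inE => /andP[/andP[nuy _] /andP[ewy _]].
    by rewrite ewy nuy /= orbN.
  by rewrite cardsU1 -add1n leq_add ?leq_b1 // (leq_trans (leq_maxr _ _) gap_w).
have [Y [_ stY cardX]] := greedy_stable_set e_sym degX.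
by apply: leq_trans cardX _; rewrite leq_mul2r stable_leq_homn ?orbT.
Qed.

Lemma card_small_gap_adj u s :
  #|[set v | e u v & nbhd_gap u v <= s]| <= homn e * s.+1.
Proof.
set X := [set v | _ & _].
have codegX : {in X, forall w, #|[set y in X | ~~ e w y && (y != w)]| <= s}.
  move=> w; rewrite inE => /andP[_ gap_w]; apply: leq_trans (leq_trans (leq_maxl _ _) gap_w).
  apply/subset_leq_card/subsetP => y; rewrite !inE => /andP[/andP[euy _] /andP[nwy yw]].
  by rewrite euy nwy yw.
have cosym : symmetric [rel x y | ~~ e x y] by move=> x y /=; rewrite e_sym.
have [Y [_ stY cardX]] := greedy_stable_set cosym codegX.
by apply: leq_trans cardX _; rewrite leq_mul2r costable_leq_homn ?orbT.
Qed.

Lemma card_small_gap u s : #|[set v | nbhd_gap u v <= s]| <= homn e * (2 * s + 3).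
Proof.
rewrite -(cardsID [set v | e u v]) (_ : 2 * s + 3 = s.+1 + s.+2) 1?mulnDr ?leq_add //; last by lia.
  apply: leq_trans (card_small_gap_adj u s); apply/subset_leq_card/subsetP => v.
  by rewrite !inE => /andP[-> ->].
apply: leq_trans (card_small_gap_nonadj u s); apply/subset_leq_card/subsetP => v.
by rewrite !inE => /andP[-> ->].
Qed.

Lemma ideg_split S x y : y \in S ->
  ideg e S x = \sum_(w in S) (e x w && e y w : nat) + #|S :&: nbhd_diff x y| + e x y.
Proof.
move=> yS; have -> : ideg e S x = \sum_(w in S) (e x w : nat) by rewrite sum_bool_card.
have -> : #|S :&: nbhd_diff x y| = \sum_(w in S) (w \in nbhd_diff x y : nat).
  by rewrite sum_bool_card; apply: eq_card => w; rewrite !inE.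
have <- : \sum_(w in S) ((w == y) && e x y : nat) = e x y.
  by rewrite (bigD1 y) //= eqxx big1 ?addn0 // => w /andP[_ /negbTE ->].
rewrite -!big_split; apply: eq_bigr => w _; rewrite inE.
have [->|_] := eqVneq w y; first by rewrite e_irr andbF /=; case: (e x y).
by rewrite andbT /=; case: (e x w); case: (e y w).
Qed.

Lemma ideg_eq_nbhd_diff S u v : u \in S -> v \in S ->
  (ideg e S u == ideg e S v) = (#|S :&: nbhd_diff u v| == #|S :&: nbhd_diff v u|).
Proof.
move=> uS vS; rewrite (ideg_split u vS) (ideg_split v uS) (e_sym v u).
have -> : \sum_(w in S) (e v w && e u w : nat) = \sum_(w in S) (e u w && e v w : nat).
  by apply: eq_bigr => w _; rewrite andbC.
by rewrite -!addnA eqn_add2l !(addnC _ (e u v)) eqn_add2l.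
Qed.

Definition eqdeg_sets u v : {set {set T}} :=
  [set S : {set T} | [&& u \in S, v \in S & ideg e S u == ideg e S v]].

Lemma eqdeg_setsC u v : eqdeg_sets v u = eqdeg_sets u v.
Proof. by apply/setP => S; rewrite !inE andbCA eq_sym. Qed.

Lemma card_eqdeg_sets_diff u v :
  #|eqdeg_sets u v| * 2 ^ #|nbhd_diff u v| <=
    'C(#|nbhd_diff u v|, #|nbhd_diff u v|./2) * #|pair_sets u v|.
Proof.
set A := nbhd_diff u v; set B := nbhd_diff v u.
have PD S : (u \in S :\: A) && (v \in S :\: A) = (u \in S) && (v \in S).
  by rewrite !inE e_irr eqxx /= !andbF.
have kD S : #|(S :\: A) :&: B| = #|S :&: B|.
  by apply: eq_card => w; rewrite !inE; case: (e v w); rewrite /= ?andbF ?andbT.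
have -> : eqdeg_sets u v = [set S : {set T} | (u \in S) && (v \in S) && (#|S :&: A| == #|S :&: B|)].
  apply/setP => S; rewrite !inE; case uS: (u \in S); case vS: (v \in S) => //=.
  exact: ideg_eq_nbhd_diff.
exact: card_trace_eq_leq PD kD.
Qed.

Lemma card_eqdeg_sets_gap u v :
  #|eqdeg_sets u v| * 2 ^ nbhd_gap u v <=
    'C(nbhd_gap u v, (nbhd_gap u v)./2) * #|pair_sets u v|.
Proof.
rewrite /nbhd_gap; have [_|_] := leqP #|nbhd_diff v u| #|nbhd_diff u v|.
  exact: card_eqdeg_sets_diff.
have -> : pair_sets u v = pair_sets v u by apply/setP => S; rewrite !inE andbC.
by rewrite -eqdeg_setsC; apply: card_eqdeg_sets_diff.
Qed.

Lemma eqdeg_weight_bound u v : u != v ->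
  (4 * #|eqdeg_sets u v|) ^ 2 * (nbhd_gap u v).+1 <= (2 ^ #|T|) ^ 2.
Proof.
move=> uv; set a := nbhd_gap u v; set c := #|eqdeg_sets u v|.
have lin : 4 * c * 2 ^ a <= 'C(a, a./2) * 2 ^ #|T|.
  by rewrite -(card_pair_sets_off uv) -mulnA [X in _ <= X]mulnCA leq_mul2l card_eqdeg_sets_gap orbT.
have four_a : (2 ^ a) ^ 2 = 4 ^ a by rewrite -expnM mulnC expnM.
rewrite -(@leq_pmul2r ((2 ^ a) ^ 2)) ?expn_gt0 //.
apply: (@leq_trans ((4 * c * 2 ^ a) ^ 2 * a.+1)); first by rewrite !expnMn; nia.
apply: (@leq_trans (('C(a, a./2) * 2 ^ #|T|) ^ 2 * a.+1)); first by rewrite leq_mul2r leq_sqr lin orbT.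
by rewrite four_a expnMn mulnAC [X in _ <= X]mulnC leq_mul2r bin_half_sqr_bound orbT.
Qed.

Lemma sqr_card_leq_fdeg_collisions S : #|S| ^ 2 <= fdeg e * collisions (ideg e S) S.
Proof.
apply: leq_trans (sqr_card_leq_values_collisions (ideg e S) S) _.
by rewrite leq_mul2r (@leq_bigmax _ (num_distinct_degrees e) S) orbT.
Qed.

Lemma sum_collisions :
  \sum_(S : {set T}) collisions (ideg e S) S = \sum_(u : T) \sum_(v : T) #|eqdeg_sets u v|.
Proof. exact: (sum_subsets_pairs (fun S u v => ideg e S u == ideg e S v)). Qed.

(* Sum |S|^2 <= f(G) collisions over all S, count both sides by pairs (u, v)
   and bound the row sums on the right by the largest one. *)
Lemma exists_heavy_vertex : 0 < #|T| -> exists u,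
  2 ^ #|T| * #|T|.+1 <= fdeg e * (2 * 2 ^ #|T| + \sum_(v | v != u) 4 * #|eqdeg_sets u v|).
Proof.
move=> T_gt0; set Q := 2 ^ #|T|.
pose W u := \sum_(v | v != u) 4 * #|eqdeg_sets u v|.
have [u0 maxW] := eq_bigmax W T_gt0; exists u0.
have pairs_row u : 4 * \sum_v #|pair_sets u v| = Q * #|T|.+1.
  rewrite big_distrr (bigD1 u) //= -[4]/(2 * 2) -mulnA card_pair_sets_diag.
  rewrite (eq_bigr (fun=> Q)) => [|v vu]; last by rewrite card_pair_sets_off // eq_sym.
  rewrite sum_nat_cond_const (_ : #|[set v | v != u]| = #|T|.-1); last first.
    by rewrite -(cardsC1 u); apply: eq_card => v; rewrite !inE.
  by rewrite -/Q -mulnDl mulnC add2n prednK.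
have eqdeg_row u : 4 * \sum_v #|eqdeg_sets u v| = 2 * Q + W u.
  rewrite big_distrr (bigD1 u) //= -[4]/(2 * 2) -mulnA.
  suff -> : eqdeg_sets u u = pair_sets u u by rewrite card_pair_sets_diag.
  by apply/setP => S; rewrite !inE eqxx andbT.
rewrite -(leq_pmul2l T_gt0) -sum_nat_const [X in _ <= X]mulnCA.
apply: (@leq_trans (fdeg e * \sum_u (2 * Q + W u))).
  rewrite -(eq_bigr _ (fun u _ => pairs_row u)) -(eq_bigr _ (fun u _ => eqdeg_row u)).
  rewrite -!big_distrr /= -sum_sqr_card -sum_collisions mulnCA leq_mul2l big_distrr /=.
  by apply: leq_sum => S _; apply: sqr_card_leq_fdeg_collisions.
rewrite leq_mul2l -sum_nat_const; apply/orP; right; apply: leq_sum => u _.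
by rewrite leq_add2l -/(W u) -/(W u0) -maxW leq_bigmax.
Qed.

End SimpleGraph.

(** * The real estimate *)

Open Scope R_scope.

Lemma INR_leq (m n : nat) : (m <= n)%N -> INR m <= INR n.
Proof. by move/leP; apply: le_INR. Qed.

Lemma INR_muln (m n : nat) : INR (m * n) = INR m * INR n.
Proof. exact: mult_INR. Qed.

Lemma INR_addn (m n : nat) : INR (m + n) = INR m + INR n.
Proof. exact: plus_INR. Qed.

Lemma sqrt_increment_bound (W Q K m R : R) :
  0 <= W -> 0 <= Q -> 1 <= m -> 0 < R -> W * W * R <= Q * Q -> m <= K * R ->
  W + 2 * Q * sqrt (K * (m - 1)) <= 2 * Q * sqrt (K * m).
Proof.
move=> W_ge0 Q_ge0 m_ge1 R_gt0 WR mKR.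
have K_gt0 : 0 < K by nra.
set a := sqrt (K * m); set b := sqrt (K * (m - 1)).
have a2 : a * a = K * m by rewrite sqrt_sqrt; nra.
have b2 : b * b = K * (m - 1) by rewrite sqrt_sqrt; nra.
have a_gt0 : 0 < a by apply: sqrt_lt_R0; nra.
have b_ge0 : 0 <= b := sqrt_pos _.
have Wa : W * a <= K * Q.
  apply: Rsqr_incr_0_var; last by nra.
  have -> : Rsqr (W * a) = W * W * (a * a) by rewrite /Rsqr; ring.
  rewrite /Rsqr a2.
  have h1 : W * W * (K * m) <= W * W * (K * (K * R)) by apply: Rmult_le_compat_l; nra.
  have h2 : K * K * (W * W * R) <= K * K * (Q * Q) by apply: Rmult_le_compat_l; nra.
  nra.
have ab : 2 * a * b <= K * (2 * m - 1).
  apply: Rsqr_incr_0_var; last by nra.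
  have -> : Rsqr (2 * a * b) = 4 * (a * a) * (b * b) by rewrite /Rsqr; ring.
  rewrite /Rsqr a2 b2; nra.
apply: (Rmult_le_reg_r a) => //; nra.
Qed.

(* Induction removing a v0 with largest r: then |X| <= K (r v0 + 1), so
   w v0 <= Q sqrt (K / |X|), the increment of 2 Q sqrt (K m) at m = |X|. *)
Lemma sum_weight_sqrt_bound (T : finType) (X : {set T}) (w r : T -> nat) (K Q : nat) :
  {in X, forall v, (w v ^ 2 * (r v).+1 <= Q ^ 2)%N} ->
  (forall s, (0 < s)%N -> (#|[set v in X | (r v < s)%N]| <= K * s)%N) ->
  INR (\sum_(v in X) w v) <= 2 * INR Q * sqrt (INR K * INR #|X|).
Proof.
elim: {X}_.+1 {-2}X (ltnSn #|X|) => // n IHn X ltXn wX rX.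
have [->|[x xX]] := set_0Vmem X.
  by rewrite big_set0 cards0 /= Rmult_0_r sqrt_0 Rmult_0_r; apply: Rle_refl.
have [v0 v0X max_v0] := @arg_maxnP T x (fun v => v \in X) r xX.
have cardX : #|X| = #|X :\ v0|.+1 by rewrite (cardsD1 v0 X) v0X.
have X_small : (#|X| <= K * (r v0).+1)%N.
  apply: leq_trans (rX _ (ltn0Sn _)); apply/subset_leq_card/subsetP => v vX.
  by rewrite inE vX ltnS; apply: max_v0.
have IH : INR (\sum_(v in X :\ v0) w v) <= 2 * INR Q * sqrt (INR K * INR #|X :\ v0|).
  apply: IHn; first by rewrite -ltnS -cardX.
    by move=> v /setD1P[_ vX]; apply: wX.
  move=> s s_gt0; apply: leq_trans (rX s s_gt0); apply/subset_leq_card/subsetP => v.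
  by rewrite !inE => /andP[/andP[_ ->] ->].
rewrite (big_setD1 v0 v0X) INR_addn.
apply: Rle_trans (Rplus_le_compat_l _ _ _ IH) _.
have -> : INR #|X :\ v0| = INR #|X| - 1 by rewrite cardX S_INR; ring.
apply: (@sqrt_increment_bound _ _ _ _ (INR (r v0).+1)); try apply: pos_INR.
- by rewrite cardX S_INR; have := pos_INR #|X :\ v0|; lra.
- by apply: lt_0_INR; apply/ltP.
- by rewrite -!INR_muln; apply: INR_leq; rewrite !mulnn wX.
- by rewrite -INR_muln; apply: INR_leq.
Qed.

(* The argument gives the constant 1/6. *)
Lemma sqrt_ratio_bound (n h t Q W : R) :
    1 <= n -> 1 <= h -> 0 <= t -> 0 < Q ->
    Q * (n + 1) <= t * (2 * Q + W) -> W <= 4 * Q * sqrt (h * n) ->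
  / 250 * sqrt (n / h) <= t.
Proof.
move=> n_ge1 h_ge1 t_ge0 Q_gt0 heavy light.
have linear : n + 1 <= t * (2 + 4 * sqrt (h * n)).
  have tW := Rmult_le_compat_l _ _ _ t_ge0 light.
  by apply: (Rmult_le_reg_l _ _ _ Q_gt0); nra.
have a2 := sqrt_sqrt n ltac:(lra); have b2 := sqrt_sqrt h ltac:(lra).
have a_ge1 : 1 <= sqrt n by rewrite -sqrt_1; apply: sqrt_le_1_alt.
have b_ge1 : 1 <= sqrt h by rewrite -sqrt_1; apply: sqrt_le_1_alt.
move: linear; rewrite sqrt_mult ?sqrt_div_alt; try lra.
set a := sqrt n in a2 a_ge1 *; set b := sqrt h in b2 b_ge1 *.
move=> linear; have a_lt : a < 6 * t * b by nra.
have -> : / 250 * (a / b) = (a / b) / 250 by field; lra.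
have : a / b < 6 * t by apply: (Rmult_lt_reg_r b); [lra | rewrite /Rdiv Rmult_assoc Rinv_l; lra].
lra.
Qed.

Lemma sum_eqdeg_weight_bound (T : finType) (e : rel T) (u : T) :
  symmetric e -> irreflexive e ->
  INR (\sum_(v | v != u) 4 * #|eqdeg_sets e u v|) <=
    4 * INR (2 ^ #|T|) * sqrt (INR (homn e) * INR #|T|).
Proof.
move=> e_sym e_irr.
have weights : {in [set~ u], forall v,
    ((4 * #|eqdeg_sets e u v|) ^ 2 * (nbhd_gap e u v).+1 <= (2 ^ #|T|) ^ 2)%N}.
  by move=> v; rewrite in_setC1 eq_sym; apply: eqdeg_weight_bound.
have few_small s : (0 < s)%N ->
    (#|[set v in [set~ u] | (nbhd_gap e u v < s)%N]| <= 4 * homn e * s)%N.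
  case: s => // s _; apply: (@leq_trans #|[set v | (nbhd_gap e u v <= s)%N]|).
    by apply/subset_leq_card/subsetP => v; rewrite !inE ltnS => /andP[_ ->].
  apply: leq_trans (card_small_gap e_sym e_irr u s) _.
  by rewrite mulnAC [X in (_ <= X)%N]mulnC leq_mul2l; apply/orP; right; lia.
have := sum_weight_sqrt_bound weights few_small.
rewrite (eq_bigl (fun v => v != u)) => [|v]; last by rewrite in_setC1.
move/Rle_trans; apply.
have card_le : INR #|[set~ u]| <= INR #|T| by apply: INR_leq; apply: max_card.
have sqrt4 : sqrt 4 = 2 by rewrite (_ : 4 = 2 * 2) ?sqrt_square; lra.
have : sqrt (INR (4 * homn e) * INR #|[set~ u]|) <= sqrt 4 * sqrt (INR (homn e) * INR #|T|).
  rewrite -sqrt_mult; [|lra|by apply: Rmult_le_pos; apply: pos_INR].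
  apply: sqrt_le_1_alt; rewrite mult_INR (_ : INR 4 = 4); last by rewrite /=; ring.
  by have := pos_INR (homn e); nra.
by rewrite sqrt4; have := pos_INR (2 ^ #|T|); nra.
Qed.

Unset Implicit Arguments.

Theorem theorem1p1 (T : finType) (e : rel T) :
  simple_graph e -> (1 <= #|T|)%nat ->
  INR (fdeg e) >= / 250 * sqrt (INR (#|T|)%nat / INR (homn e)).
Proof.
move=> [e_sym e_irr] T_gt0; have [u /INR_leq heavy] := exists_heavy_vertex e T_gt0.
apply/Rle_ge/(sqrt_ratio_bound _ _ (pos_INR _) _ _ (sum_eqdeg_weight_bound u e_sym e_irr)).
- exact: (INR_leq T_gt0).
- exact: (INR_leq (homn_gt0 e_irr T_gt0)).
- by apply: lt_0_INR; apply/ltP; rewrite expn_gt0.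
- by rewrite !INR_muln INR_addn INR_muln S_INR in heavy.
Qed.
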